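(* Consider a one-way communication task in which Alice receives $x\in\{1,\dots,N\}$ uniformly at random, Bob receives $y\in\{1,\dots,M\}$ and outputs $z\in\{1,\dots,D\}$, with success metric $\mathcal{S}=\sum_{x,y,z}c(x,y,z)p(z|x,y)$ where $c(x,y,z)\ge0$ and $\sum_{x,y,z}c(x,y,z)=1$. A classical protocol consists of an encoding $p_e(m|x)$ over messages $m$ in a finite set and a decoding $p_d(z|y,m)$, with $p(z|x,y)=\sum_mp_e(m|x)p_d(z|y,m)$ and distinguishability $\mathcal{D}_C=\frac1N\sum_m\max_xp_e(m|x)$. Let $d_C\ge1$, let $\overline{\mathcal{S}}_{d_C}$ be the maximum of $\mathcal{S}$ over classical protocols whose message set has at most $d_C$ elements, and let $\mathcal{S}_C$ be the maximum of $\mathcal{S}$ over classical protocols (with message set of arbitrary finite size) whose distinguishability satisfies $\mathcal{D}_C\le d_C/N$. Then $\overline{\mathcal{S}}_{d_C}\le\mathcal{S}_C$. *)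

From mathcomp Require Import all_boot all_order all_algebra.
Set Implicit Arguments. Unset Strict Implicit. Unset Printing Implicit Defensive.
Import Order.TTheory GRing.Theory Num.Theory.
Local Open Scope ring_scope.

(* Alice's inputs x : 'I_N, Bob's inputs y : 'I_M, outputs z : 'I_D,
   messages m : 'I_K (a finite message set of size K). *)

Record protocol (R : realFieldType) (N M D K : nat) := Protocol {
  pe : 'I_N -> 'I_K -> R;            (* pe x m = p_e(m|x) *)
  pd : 'I_M -> 'I_K -> 'I_D -> R     (* pd y m z = p_d(z|y,m) *)
}.

Definition valid_protocol (R : realFieldType) N M D K (P : protocol R N M D K) :=
  (forall x m, 0 <= pe P x m) /\ (forall x, \sum_(m < K) pe P x m = 1) /\
  (forall y m z, 0 <= pd P y m z) /\ (forall y m, \sum_(z < D) pd P y m z = 1).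

Definition behaviour (R : realFieldType) N M D K (P : protocol R N M D K)
  (x : 'I_N) (y : 'I_M) (z : 'I_D) : R :=
  \sum_(m < K) pe P x m * pd P y m z.

Definition success (R : realFieldType) N M D K
  (c : 'I_N -> 'I_M -> 'I_D -> R) (P : protocol R N M D K) : R :=
  \sum_(x < N) \sum_(y < M) \sum_(z < D) c x y z * behaviour P x y z.

(* distinguishability D_C = (1/N) sum_m max_x p_e(m|x)
   (the max over the nonnegative values pe x m, with 0 as neutral element) *)
Definition distinguishability (R : realFieldType) N M D K (P : protocol R N M D K) : R :=
  N%:R^-1 * \sum_(m < K) \big[Num.max/0]_(x < N) pe P x m.

Definition valid_cost (R : realFieldType) N M D (c : 'I_N -> 'I_M -> 'I_D -> R) :=
  (forall x y z, 0 <= c x y z) /\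
  \sum_(x < N) \sum_(y < M) \sum_(z < D) c x y z = 1.

From mathcomp Require Import all_boot all_order all_algebra.
Set Implicit Arguments. Unset Strict Implicit. Unset Printing Implicit Defensive.
Import Order.TTheory GRing.Theory Num.Theory.
Local Open Scope ring_scope.

(* Every probability p_e(m|x) is at most 1, so each of the K summands
   max_x p_e(m|x) of the distinguishability is at most 1 and D_C <= K/N:
   a protocol with at most d_C messages is itself admissible for S_C. *)

Lemma ler_sum_term (R : numDomainType) (I : finType) (F : I -> R) (j : I) :
  (forall i, 0 <= F i) -> F j <= \sum_i F i.
Proof.
move=> F_ge0; rewrite (bigD1 j) //= lerDl.
by apply: sumr_ge0 => i _; exact: F_ge0.
Qed.

Section ValidProtocol.

Variables (R : realFieldType) (N M D K : nat) (P : protocol R N M D K).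
Hypothesis validP : valid_protocol P.

Lemma pe_le1 (x : 'I_N) (m : 'I_K) : pe P x m <= 1.
Proof.
case: validP => pe_ge0 [pe_sum1 _].
by rewrite -(pe_sum1 x); apply: ler_sum_term => i; exact: pe_ge0.
Qed.

Lemma distinguishability_le_card : distinguishability P <= K%:R / N%:R.
Proof.
rewrite /distinguishability mulrC ler_wpM2r ?invr_ge0 ?ler0n //.
rewrite -[K in K%:R]card_ord -sumr_const; apply: ler_sum => m _.
by apply: bigmax_le => // x _; exact: pe_le1.
Qed.

End ValidProtocol.

Theorem mainTheorem9 (R : realFieldType) (N M D : nat) (dC : nat)
  (c : 'I_N -> 'I_M -> 'I_D -> R) :
  (0 < N)%N -> (1 <= dC)%N -> valid_cost c ->
  forall (K : nat) (P : protocol R N M D K),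
    (K <= dC)%N -> valid_protocol P ->
    exists (K' : nat) (Q : protocol R N M D K'),
      valid_protocol Q /\
      distinguishability Q <= dC%:R / N%:R /\
      success c P <= success c Q.
Proof.
move=> _ _ _ K P K_le_dC validP.
exists K, P; split=> //; split=> //.
apply: le_trans (distinguishability_le_card validP) _.
by rewrite ler_wpM2r ?invr_ge0 ?ler0n // ler_nat.
Qed.
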